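(* Let $x,y,z\ge 0$ with at most one of them zero, and $p>0$ (the approximation is intended for the regime $x,y,z\ll p$). Let $a=(x+y+z)/3$ and $b=(\sqrt3/2)(xy+xz+yz)^{1/2}$. Then $$R_J(x,y,z,p)=\frac3p R_F(x,y,z)+\frac{3\pi}{2p^{3/2}}(-1+r),\quad\text{where}\quad \frac{\sqrt{b/p}}{1+\sqrt{b/p}}<r<\frac32\,\frac{\sqrt{a/p}}{1+\sqrt{a/p}}.$$ In the complete case ($z=0$, $x,y>0$), $$R_J(x,y,0,p)=\frac3p\left(R_F(x,y,0)-\frac{\pi}{2\sqrt p}\right)\left(1+\frac{\theta/p}{1-\theta/p}\right),$$ where $\sqrt{xy}\le\theta\le(x+y)/2$, with equalities iff $x=y$.
   Context: For $x,y,z\ge 0$ with at most one zero and $p>0$: $R_F(x,y,z)=\frac12\int_0^\infty[(t+x)(t+y)(t+z)]^{-1/2}\,dt$ and $R_J(x,y,z,p)=\frac32\int_0^\infty[(t+x)(t+y)(t+z)]^{-1/2}(t+p)^{-1}\,dt$. *)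

From Stdlib Require Import Reals.
From Coquelicot Require Import Coquelicot.
Open Scope R_scope.

Definition RF_integrand (x y z : R) (t : R) : R :=
  / sqrt ((t + x) * (t + y) * (t + z)).

(* R_F(x,y,z) = 1/2 \int_0^\infty [(t+x)(t+y)(t+z)]^{-1/2} dt,
   as an improper integral over ]0, +oo[ (the integrand may be singular at
   t = 0 when one argument is zero). *)
Definition RF (x y z : R) : R :=
  / 2 * RInt_gen (RF_integrand x y z) (at_right 0) (Rbar_locally p_infty).

Definition RJ (x y z p : R) : R :=
  3 / 2 * RInt_gen (fun t => RF_integrand x y z t / (t + p))
                   (at_right 0) (Rbar_locally p_infty).

From Stdlib Require Import Reals Lra Psatz.
From Coquelicot Require Import Coquelicot.
Open Scope R_scope.

(* With f the integrand of R_F, the combination D := 2 R_F - (2/3) p R_J equals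
   \int_0^oo f(t) t/(t+p) dt, and r = 1 - (sqrt p / PI) D.  D is compared with the same
   integral for the integrand 1/(sqrt t (t+c)) of R_F(0,c,c), an arctangent integral:
   \int_0^oo t dt / (sqrt t (t+c) (t+p)) = PI / (sqrt c + sqrt p).  The upper bound on D
   uses f(t) < 1/(sqrt t (t+b)), i.e. (t+x)(t+y)(t+z) > t (t+b)^2; the lower bound uses
   t f(t) > (t - a/2)/(sqrt t (t+a)), which follows from (t+x)(t+y)(t+z) <= (t+a)^3 (AM-GM).
   In the complete case, theta is the mean of sqrt((t+x)(t+y)) - t, a quantity lying
   between sqrt(xy) and (x+y)/2 (strictly unless x = y), for the weight f(t)/(t+p). *)

(** * Improper integrals over ]0, +oo[ *)

Notation is_RInt_0_oo f l := (is_RInt_gen f (at_right 0) (Rbar_locally p_infty) l).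
Notation ex_RInt_0_oo f := (ex_RInt_gen f (at_right 0) (Rbar_locally p_infty)).
Notation RInt_0_oo f := (RInt_gen f (at_right 0) (Rbar_locally p_infty)).

Lemma filter_prod_0_oo_pos :
  filter_prod (at_right 0) (Rbar_locally p_infty) (fun ab => 0 < fst ab /\ 0 < snd ab).
Proof.
  apply Filter_prod with (fun a => 0 < a) (fun b => 0 < b).
  - exists (mkposreal 1 Rlt_0_1); intros; assumption.
  - exists 0; intros; assumption.
  - intros; simpl; split; assumption.
Qed.

Lemma Rmin_le_pos u v t : 0 < u -> 0 < v -> Rmin u v <= t -> 0 < t.
Proof. intros Hu Hv Ht. pose proof (Rmin_glb_lt u v 0 Hu Hv). lra. Qed.

Lemma filter_prod_0_oo_segment_pos :
  filter_prod (at_right 0) (Rbar_locally p_infty)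
    (fun ab => forall t, Rmin (fst ab) (snd ab) <= t <= Rmax (fst ab) (snd ab) -> 0 < t).
Proof.
  eapply filter_imp; [|exact filter_prod_0_oo_pos].
  intros [u v] [Hu Hv] t [Ht _]. exact (Rmin_le_pos u v t Hu Hv Ht).
Qed.

Lemma ex_RInt_continuous_pos (f : R -> R) u v :
  (forall t, 0 < t -> continuous f t) -> 0 < u -> 0 < v -> ex_RInt f u v.
Proof.
  intros Hf Hu Hv. apply (@ex_RInt_continuous R_CompleteNormedModule).
  intros t [Ht _]. exact (Hf t (Rmin_le_pos u v t Hu Hv Ht)).
Qed.

Lemma is_RInt_0_oo_ext (f g : R -> R) l :
  (forall t, 0 < t -> f t = g t) -> is_RInt_0_oo f l -> is_RInt_0_oo g l.
Proof.
  intros E. apply is_RInt_gen_ext. eapply filter_imp; [|exact filter_prod_0_oo_segment_pos].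
  intros ab Hab t Ht. apply E, Hab. lra.
Qed.

Lemma RInt_0_oo_correct (f : R -> R) : ex_RInt_0_oo f -> is_RInt_0_oo f (RInt_0_oo f).
Proof.
  exact (@RInt_gen_correct R_CompleteNormedModule _ _
    (Proper_StrongProper _ (at_right_proper_filter 0))
    (Proper_StrongProper _ (Rbar_locally_filter p_infty)) f).
Qed.

Lemma filterlim_at_right_0_continuous (H : R -> R) :
  continuous H 0 -> filterlim H (at_right 0) (locally (H 0)).
Proof.
  intros HC. eapply filterlim_filter_le_1; [|exact HC].
  intros P [d Hd]. exists d. intros; apply Hd; auto.
Qed.

Lemma filterlim_Rinv_p_infty : filterlim Rinv (Rbar_locally p_infty) (at_right 0).
Proof.
  intros P [d Hd]. exists (/ d). intros t Ht.
  assert (Hd0 : 0 < / d) by (apply Rinv_0_lt_compat, cond_pos).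
  assert (Hinv : 0 < / t) by (apply Rinv_0_lt_compat; lra).
  apply Hd; [|exact Hinv].
  change (Rabs (/ t - 0) < d). rewrite Rminus_0_r, Rabs_pos_eq by lra.
  rewrite <- (Rinv_inv d). apply Rinv_lt_contravar; nra.
Qed.

Lemma filterlim_p_infty_continuous_inv (G H : R -> R) :
  (forall t, 0 < t -> G t = H (/ t)) -> continuous H 0 ->
  filterlim G (Rbar_locally p_infty) (locally (H 0)).
Proof.
  intros HE HC. apply (filterlim_ext_loc (fun t => H (/ t))).
  - exists 0. intros; symmetry; apply HE; auto.
  - eapply filterlim_comp; [exact filterlim_Rinv_p_infty|].
    apply filterlim_at_right_0_continuous, HC.
Qed.

Lemma is_RInt_0_oo_antiderivative (G g : R -> R) (l0 l1 : R) :
  (forall t, 0 < t -> is_derive G t (g t)) -> (forall t, 0 < t -> continuous g t) ->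
  filterlim G (at_right 0) (locally l0) -> filterlim G (Rbar_locally p_infty) (locally l1) ->
  is_RInt_0_oo g (l1 - l0).
Proof.
  intros HD HC H0 H1.
  assert (HDG : forall t, 0 < t -> Derive G t = g t) by (intros; apply is_derive_unique, HD; auto).
  apply (is_RInt_0_oo_ext (Derive G)); [exact HDG|].
  apply is_RInt_gen_Derive; auto;
    eapply filter_imp; try exact filter_prod_0_oo_segment_pos; intros ab Hab t Ht;
    specialize (Hab t Ht).
  - eexists; apply HD, Hab.
  - apply (continuous_ext_loc _ g); [|apply HC, Hab].
    assert (Hp : 0 < t / 2) by lra.
    exists (mkposreal _ Hp). intros u Hu. symmetry. apply HDG.
    change (Rabs (u - t) < t / 2) in Hu. apply Rabs_def2 in Hu. lra.
Qed.

Section Dominated.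

Variables f g G : R -> R.
Hypothesis f_cont : forall t, 0 < t -> continuous f t.
Hypothesis f_dominated : forall t, 0 < t -> 0 <= f t <= g t.
Hypothesis G_derive : forall t, 0 < t -> is_derive G t (g t).
Hypothesis g_cont : forall t, 0 < t -> continuous g t.

Lemma RInt_le_antiderivative u v : 0 < u -> u <= v -> 0 <= RInt f u v <= G v - G u.
Proof.
  intros Hu Huv.
  assert (Hseg : forall t, Rmin u v <= t <= Rmax u v -> 0 < t).
  { intros t [Ht _]. exact (Rmin_le_pos u v t Hu ltac:(lra) Ht). }
  assert (Hint : is_RInt g u v (G v - G u)).
  { apply (is_RInt_derive G g); intros t Ht; [apply G_derive | apply g_cont]; auto. }
  assert (Hf : ex_RInt f u v) by (apply ex_RInt_continuous_pos; auto; lra).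
  split.
  - apply RInt_ge_0; auto. intros t Ht; apply f_dominated; lra.
  - rewrite <- (is_RInt_unique _ _ _ _ Hint).
    apply RInt_le; auto; [eexists; exact Hint|]. intros t Ht; apply f_dominated; lra.
Qed.

Lemma Rabs_RInt_le_antiderivative u v :
  0 < u -> 0 < v -> Rabs (RInt f u v) <= Rabs (G v - G u).
Proof.
  intros Hu Hv. destruct (Rle_dec u v) as [Huv|Hvu].
  - pose proof (RInt_le_antiderivative u v Hu Huv). rewrite !Rabs_pos_eq; lra.
  - pose proof (RInt_le_antiderivative v u Hv ltac:(lra)).
    rewrite <- opp_RInt_swap by (apply ex_RInt_continuous_pos; auto).
    change (Rabs (- RInt f v u) <= Rabs (G v - G u)).
    rewrite <- (Rabs_Ropp (G v - G u)), Ropp_minus_distr, Rabs_Ropp, !Rabs_pos_eq; lra.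
Qed.

Lemma Rabs_RInt_sub_le_antiderivative a b a' b' :
  0 < a -> 0 < b -> 0 < a' -> 0 < b' ->
  Rabs (RInt f a' b' - RInt f a b) <= Rabs (G a - G a') + Rabs (G b' - G b).
Proof.
  intros Ha Hb Ha' Hb'.
  assert (Ex : forall u v, 0 < u -> 0 < v -> ex_RInt f u v)
    by (intros; apply ex_RInt_continuous_pos; auto).
  rewrite <- (RInt_Chasles f a' a b'), <- (RInt_Chasles f a b b') by auto.
  change (Rabs (RInt f a' a + (RInt f a b + RInt f b b') - RInt f a b)
          <= Rabs (G a - G a') + Rabs (G b' - G b)).
  replace (RInt f a' a + (RInt f a b + RInt f b b') - RInt f a b)
    with (RInt f a' a + RInt f b b') by ring.
  pose proof (Rabs_RInt_le_antiderivative a' a Ha' Ha).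
  pose proof (Rabs_RInt_le_antiderivative b b' Hb Hb').
  pose proof (Rabs_triang (RInt f a' a) (RInt f b b')).
  lra.
Qed.

Lemma ex_RInt_0_oo_dominated l0 l1 :
  filterlim G (at_right 0) (locally l0) -> filterlim G (Rbar_locally p_infty) (locally l1) ->
  ex_RInt_0_oo f.
Proof.
  intros H0 H1.
  assert (Hcauchy : exists l, filterlim (fun ab => RInt f (fst ab) (snd ab))
                      (filter_prod (at_right 0) (Rbar_locally p_infty)) (locally l)).
  { apply filterlim_locally_cauchy. intros eps.
    assert (He : 0 < eps / 4) by (destruct eps; simpl; lra).
    set (e4 := mkposreal _ He).
    exists (fun ab => (0 < fst ab /\ 0 < snd ab)
                   /\ (Rabs (G (fst ab) - l0) < e4 /\ Rabs (G (snd ab) - l1) < e4)).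
    split.
    - apply filter_and; [exact filter_prod_0_oo_pos|].
      apply Filter_prod with (fun a => ball l0 e4 (G a)) (fun b => ball l1 e4 (G b)).
      + apply H0, locally_ball.
      + apply H1, locally_ball.
      + intros a b Ha Hb; split; [exact Ha | exact Hb].
    - intros [a b] [a' b'] [[Ha Hb] [Ga Gb]] [[Ha' Hb'] [Ga' Gb']]; simpl in *.
      change (Rabs (RInt f a' b' - RInt f a b) < eps).
      pose proof (Rabs_RInt_sub_le_antiderivative a b a' b' Ha Hb Ha' Hb').
      pose proof (Rabs_triang (G a - l0) (- (G a' - l0))).
      pose proof (Rabs_triang (G b' - l1) (- (G b - l1))).
      rewrite Rabs_Ropp in *.
      replace (G a - l0 + - (G a' - l0)) with (G a - G a') in * by ring.
      replace (G b' - l1 + - (G b - l1)) with (G b' - G b) in * by ring.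
      simpl in *; lra. }
  destruct Hcauchy as [l Hl]. exists l.
  apply (filterlimi_lim_ext_loc (fun ab => RInt f (fst ab) (snd ab))); [|exact Hl].
  eapply filter_imp; [|exact filter_prod_0_oo_pos]. intros [a b] [Ha Hb].
  apply (@RInt_correct R_CompleteNormedModule), ex_RInt_continuous_pos; auto.
Qed.

End Dominated.

Lemma is_RInt_0_oo_approx (h : R -> R) l eps : is_RInt_0_oo h l -> 0 < eps ->
  exists a b, 0 < a <= 1 /\ 2 <= b /\ ex_RInt h a b /\ Rabs (RInt h a b - l) < eps.
Proof.
  intros Hh Heps.
  assert (Hl := Hh (ball l (mkposreal _ Heps)) (locally_ball _ _)); unfold filtermapi in Hl.
  assert (Hab : filter_prod (at_right 0) (Rbar_locally p_infty)
                  (fun ab => 0 < fst ab < 1 /\ 2 < snd ab)).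
  { apply Filter_prod with (fun a => 0 < a < 1) (fun b => 2 < b).
    - exists (mkposreal 1 Rlt_0_1). intros u Hu Hu0.
      change (Rabs (u - 0) < 1) in Hu. rewrite Rminus_0_r, Rabs_pos_eq in Hu; lra.
    - exists 2; auto.
    - intros; simpl; auto. }
  destruct (filter_ex _ (filter_and _ _ Hl Hab)) as [[a b] [[y [Hy Hyl]] [Ha Hb]]].
  simpl in *. exists a, b. repeat split; try lra.
  - exists y; exact Hy.
  - rewrite (is_RInt_unique _ _ _ _ Hy). exact Hyl.
Qed.

Lemma is_RInt_0_oo_ge0 (h : R -> R) l :
  (forall t, 0 < t -> 0 <= h t) -> is_RInt_0_oo h l -> 0 <= l.
Proof.
  intros Hpos Hh. apply Rnot_lt_le. intros Hl.
  destruct (is_RInt_0_oo_approx h l (- l) Hh ltac:(lra)) as (a & b & Ha & Hb & Hab & Happrox).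
  assert (0 <= RInt h a b) by (apply RInt_ge_0; auto; [lra | intros; apply Hpos; lra]).
  apply Rabs_def2 in Happrox. lra.
Qed.

Lemma is_RInt_0_oo_gt0 (h : R -> R) l :
  (forall t, 0 < t -> continuous h t) -> (forall t, 0 < t -> 0 < h t) ->
  is_RInt_0_oo h l -> 0 < l.
Proof.
  intros Hc Hpos Hh.
  assert (H12 : 0 < RInt h 1 2).
  { apply RInt_gt_0; [lra | intros; apply Hpos; lra | intros; apply Hc; lra]. }
  destruct (is_RInt_0_oo_approx h l _ Hh H12) as (a & b & Ha & Hb & _ & Happrox).
  assert (Ex : forall u v, 0 < u -> 0 < v -> ex_RInt h u v)
    by (intros; apply ex_RInt_continuous_pos; auto).
  assert (Hsub : forall u v, 0 < u <= v -> 0 <= RInt h u v).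
  { intros u v Huv. apply RInt_ge_0; [lra | apply Ex; lra | intros; apply Rlt_le, Hpos; lra]. }
  rewrite <- (RInt_Chasles h a 1 b), <- (RInt_Chasles h 1 2 b) in Happrox by (apply Ex; lra).
  pose proof (Hsub a 1 ltac:(lra)). pose proof (Hsub 2 b ltac:(lra)).
  apply Rabs_def2 in Happrox. unfold plus in Happrox; simpl in Happrox. lra.
Qed.

Lemma is_RInt_0_oo_le (f g : R -> R) lf lg :
  (forall t, 0 < t -> f t <= g t) -> is_RInt_0_oo f lf -> is_RInt_0_oo g lg -> lf <= lg.
Proof.
  intros Hfg Hf Hg.
  assert (Hpos : forall t, 0 < t -> 0 <= g t - f t) by (intros t Ht; pose proof (Hfg t Ht); lra).
  pose proof (is_RInt_0_oo_ge0 _ _ Hpos (is_RInt_gen_minus _ _ _ _ Hg Hf)) as Hdiff.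
  change (0 <= lg - lf) in Hdiff. lra.
Qed.

Lemma is_RInt_0_oo_lt (f g : R -> R) lf lg :
  (forall t, 0 < t -> continuous f t) -> (forall t, 0 < t -> continuous g t) ->
  (forall t, 0 < t -> f t < g t) -> is_RInt_0_oo f lf -> is_RInt_0_oo g lg -> lf < lg.
Proof.
  intros Hfc Hgc Hfg Hf Hg.
  assert (Hc : forall t, 0 < t -> continuous (fun t => g t - f t) t)
    by (intros; apply (continuous_minus (V := R_NormedModule)); auto).
  assert (Hpos : forall t, 0 < t -> 0 < g t - f t) by (intros t Ht; pose proof (Hfg t Ht); lra).
  pose proof (is_RInt_0_oo_gt0 _ _ Hc Hpos (is_RInt_gen_minus _ _ _ _ Hg Hf)) as Hdiff.
  change (0 < lg - lf) in Hdiff. lra.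
Qed.

Lemma is_RInt_0_oo_mean_le (w h : R -> R) lo hi W M :
  (forall t, 0 < t -> 0 <= w t) -> (forall t, 0 < t -> lo <= h t <= hi) ->
  is_RInt_0_oo w W -> is_RInt_0_oo (fun t => w t * h t) M -> lo * W <= M <= hi * W.
Proof.
  intros Hw Hh HW HM. split.
  - apply (is_RInt_0_oo_le (fun t => lo * w t) (fun t => w t * h t));
      [|exact (is_RInt_gen_scal _ lo _ HW)|exact HM].
    intros t Ht. specialize (Hw t Ht). specialize (Hh t Ht). nra.
  - apply (is_RInt_0_oo_le (fun t => w t * h t) (fun t => hi * w t));
      [|exact HM|exact (is_RInt_gen_scal _ hi _ HW)].
    intros t Ht. specialize (Hw t Ht). specialize (Hh t Ht). nra.
Qed.

Lemma is_RInt_0_oo_mean_lt (w h : R -> R) lo hi W M :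
  (forall t, 0 < t -> continuous w t) -> (forall t, 0 < t -> continuous h t) ->
  (forall t, 0 < t -> 0 < w t) -> (forall t, 0 < t -> lo < h t < hi) ->
  is_RInt_0_oo w W -> is_RInt_0_oo (fun t => w t * h t) M -> lo * W < M < hi * W.
Proof.
  intros Hwc Hhc Hw Hh HW HM.
  assert (Hscal : forall k t, 0 < t -> continuous (fun t => k * w t) t).
  { intros k t Ht. apply (continuous_mult (fun _ => k) w); [apply continuous_const | auto]. }
  assert (Hwh : forall t, 0 < t -> continuous (fun t => w t * h t) t).
  { intros t Ht. apply (continuous_mult w h); auto. }
  split.
  - apply (is_RInt_0_oo_lt (fun t => lo * w t) (fun t => w t * h t) _ _ (Hscal lo) Hwh);
      [|exact (is_RInt_gen_scal _ lo _ HW)|exact HM].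
    intros t Ht. specialize (Hw t Ht). specialize (Hh t Ht). nra.
  - apply (is_RInt_0_oo_lt (fun t => w t * h t) (fun t => hi * w t) _ _ Hwh (Hscal hi));
      [|exact HM|exact (is_RInt_gen_scal _ hi _ HW)].
    intros t Ht. specialize (Hw t Ht). specialize (Hh t Ht). nra.
Qed.

(** * The integrals of R_C(0, c) *)

(* On ]0, +oo[ this is the integrand of R_F(0,c,c) = R_C(0,c) = PI / (2 sqrt c). *)
Definition RC0_integrand (c t : R) : R := / (sqrt t * (t + c)).

Definition RC0_primitive (c t : R) : R := 2 / sqrt c * atan (sqrt t / sqrt c).

Lemma is_derive_RC0_primitive c t :
  0 < c -> 0 < t -> is_derive (RC0_primitive c) t (RC0_integrand c t).
Proof.
  intros Hc Ht. unfold RC0_primitive, RC0_integrand.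
  pose proof (sqrt_lt_R0 c Hc). pose proof (sqrt_lt_R0 t Ht).
  pose proof (sqrt_sqrt c (Rlt_le _ _ Hc)) as Ec. pose proof (sqrt_sqrt t (Rlt_le _ _ Ht)) as Et.
  auto_derive; [lra|].
  set (s := sqrt t) in *; set (q := sqrt c) in *. rewrite <- Ec, <- Et. field. lra.
Qed.

Lemma continuous_RC0_integrand c t : 0 < c -> 0 < t -> continuous (RC0_integrand c) t.
Proof.
  intros Hc Ht. unfold RC0_integrand. apply (ex_derive_continuous (V := R_NormedModule)).
  pose proof (sqrt_lt_R0 t Ht). auto_derive. nra.
Qed.

Lemma atan_sqrt_div_inv c t :
  0 < c -> 0 < t -> atan (sqrt t / sqrt c) = PI / 2 - atan (sqrt (/ t) * sqrt c).
Proof.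
  intros Hc Ht. pose proof (sqrt_lt_R0 c Hc). pose proof (sqrt_lt_R0 t Ht).
  rewrite <- atan_inv.
  - f_equal. rewrite sqrt_inv. field. lra.
  - apply Rmult_lt_0_compat; auto. apply sqrt_lt_R0, Rinv_0_lt_compat; auto.
Qed.

Lemma continuous_atan_sqrt_mul c t : continuous (fun u => atan (sqrt u * c)) t.
Proof.
  apply continuous_atan_comp, (continuous_mult sqrt (fun _ => c));
    [apply continuous_sqrt | apply continuous_const].
Qed.

Lemma filterlim_RC0_primitive_0 c :
  0 < c -> filterlim (RC0_primitive c) (at_right 0) (locally 0).
Proof.
  intros Hc. replace 0 with (RC0_primitive c 0) at 2.
  - apply filterlim_at_right_0_continuous. unfold RC0_primitive, Rdiv.
    apply (continuous_mult (fun _ => 2 * / sqrt c) (fun t => atan (sqrt t * / sqrt c)));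
      [apply continuous_const | apply continuous_atan_sqrt_mul].
  - unfold RC0_primitive. rewrite sqrt_0, Rdiv_0_l, atan_0. ring.
Qed.

Lemma filterlim_RC0_primitive_p_infty c :
  0 < c -> filterlim (RC0_primitive c) (Rbar_locally p_infty) (locally (PI / sqrt c)).
Proof.
  intros Hc. pose proof (sqrt_lt_R0 c Hc).
  set (Hinv := fun u => 2 / sqrt c * (PI / 2 - atan (sqrt u * sqrt c))).
  replace (PI / sqrt c) with (Hinv 0).
  - apply filterlim_p_infty_continuous_inv.
    + intros t Ht. unfold RC0_primitive, Hinv. rewrite atan_sqrt_div_inv; auto.
    + unfold Hinv.
      apply (continuous_mult (fun _ => 2 / sqrt c) (fun u => PI / 2 - atan (sqrt u * sqrt c)));
        [apply continuous_const|].
      apply (continuous_minus (fun _ => PI / 2) (fun u => atan (sqrt u * sqrt c)));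
        [apply continuous_const | apply continuous_atan_sqrt_mul].
  - unfold Hinv. rewrite sqrt_0, Rmult_0_l, atan_0. field. lra.
Qed.

Lemma is_RInt_RC0_integrand c : 0 < c -> is_RInt_0_oo (RC0_integrand c) (PI / sqrt c).
Proof.
  intros Hc. rewrite <- (Rminus_0_r (PI / sqrt c)).
  apply (is_RInt_0_oo_antiderivative (RC0_primitive c)).
  - intros; apply is_derive_RC0_primitive; auto.
  - intros; apply continuous_RC0_integrand; auto.
  - apply filterlim_RC0_primitive_0; auto.
  - apply filterlim_RC0_primitive_p_infty; auto.
Qed.

Lemma ex_RInt_0_oo_le_RC0_integrand (f : R -> R) c k :
  0 < c -> (forall t, 0 < t -> continuous f t) ->
  (forall t, 0 < t -> 0 <= f t <= k * RC0_integrand c t) -> ex_RInt_0_oo f.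
Proof.
  intros Hc Hf Hfk.
  apply (ex_RInt_0_oo_dominated f (fun t => k * RC0_integrand c t)
           (fun t => k * RC0_primitive c t) Hf Hfk) with (k * 0) (k * (PI / sqrt c)).
  - intros t Ht. apply (is_derive_scal (RC0_primitive c)), is_derive_RC0_primitive; auto.
  - intros t Ht. apply (continuous_mult (fun _ => k) (RC0_integrand c));
      [apply continuous_const | apply continuous_RC0_integrand; auto].
  - eapply filterlim_comp; [apply filterlim_RC0_primitive_0, Hc|].
    apply (filterlim_scal_r (V := R_NormedModule) k).
  - eapply filterlim_comp; [apply filterlim_RC0_primitive_p_infty, Hc|].
    apply (filterlim_scal_r (V := R_NormedModule) k).
Qed.

Definition RC0_div_primitive (p t : R) : R :=
  sqrt t / (p * (t + p)) + atan (sqrt t / sqrt p) / (p * sqrt p).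

Lemma is_derive_RC0_div_primitive p t : 0 < p -> 0 < t ->
  is_derive (RC0_div_primitive p) t (RC0_integrand p t / (t + p)).
Proof.
  intros Hp Ht. unfold RC0_div_primitive, RC0_integrand.
  pose proof (sqrt_lt_R0 p Hp). pose proof (sqrt_sqrt p (Rlt_le _ _ Hp)) as Ep.
  pose proof (sqrt_lt_R0 t Ht). pose proof (sqrt_sqrt t (Rlt_le _ _ Ht)) as Et.
  auto_derive; [repeat split; nra|].
  set (s := sqrt t) in *; set (q := sqrt p) in *. rewrite <- Ep, <- Et. field. repeat split; nra.
Qed.

Lemma filterlim_RC0_div_primitive_0 p :
  0 < p -> filterlim (RC0_div_primitive p) (at_right 0) (locally 0).
Proof.
  intros Hp. replace 0 with (RC0_div_primitive p 0) at 2.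
  - apply filterlim_at_right_0_continuous. unfold RC0_div_primitive, Rdiv.
    apply (continuous_plus (fun t => sqrt t * / (p * (t + p)))
             (fun t => atan (sqrt t * / sqrt p) * / (p * sqrt p))).
    + apply (continuous_mult sqrt (fun t => / (p * (t + p)))); [apply continuous_sqrt|].
      apply (ex_derive_continuous (V := R_NormedModule)). auto_derive. nra.
    + apply (continuous_mult (fun t => atan (sqrt t * / sqrt p)) (fun _ => / (p * sqrt p)));
        [apply continuous_atan_sqrt_mul | apply continuous_const].
  - unfold RC0_div_primitive. rewrite sqrt_0, !Rdiv_0_l, atan_0, Rdiv_0_l. ring.
Qed.

Lemma filterlim_RC0_div_primitive_p_infty p : 0 < p ->
  filterlim (RC0_div_primitive p) (Rbar_locally p_infty) (locally (PI / (2 * p * sqrt p))).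
Proof.
  intros Hp. pose proof (sqrt_lt_R0 p Hp).
  set (Hinv := fun u => sqrt u * / (p * (1 + p * u))
                        + (PI / 2 - atan (sqrt u * sqrt p)) * / (p * sqrt p)).
  replace (PI / (2 * p * sqrt p)) with (Hinv 0).
  - apply filterlim_p_infty_continuous_inv.
    + intros t Ht. unfold RC0_div_primitive, Hinv.
      rewrite atan_sqrt_div_inv, sqrt_inv by auto. unfold Rdiv. f_equal.
      pose proof (sqrt_lt_R0 t Ht). pose proof (sqrt_sqrt t (Rlt_le _ _ Ht)) as Et.
      set (s := sqrt t) in *. rewrite <- Et. field. repeat split; nra.
    + unfold Hinv.
      apply (continuous_plus (fun u => sqrt u * / (p * (1 + p * u)))
               (fun u => (PI / 2 - atan (sqrt u * sqrt p)) * / (p * sqrt p))).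
      * apply (continuous_mult sqrt (fun u => / (p * (1 + p * u)))); [apply continuous_sqrt|].
        apply (ex_derive_continuous (V := R_NormedModule)). auto_derive. nra.
      * apply (continuous_mult (fun u => PI / 2 - atan (sqrt u * sqrt p))
                 (fun _ => / (p * sqrt p))); [|apply continuous_const].
        apply (continuous_minus (fun _ => PI / 2) (fun u => atan (sqrt u * sqrt p)));
          [apply continuous_const | apply continuous_atan_sqrt_mul].
  - unfold Hinv. rewrite sqrt_0, !Rmult_0_l, atan_0. field. lra.
Qed.

Lemma is_RInt_RC0_integrand_div_same p : 0 < p ->
  is_RInt_0_oo (fun t => RC0_integrand p t / (t + p))
    (PI / (sqrt p * sqrt p * (sqrt p + sqrt p))).
Proof.
  intros Hp. pose proof (sqrt_lt_R0 p Hp). pose proof (sqrt_sqrt p (Rlt_le _ _ Hp)) as Ep.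
  replace (PI / (sqrt p * sqrt p * (sqrt p + sqrt p))) with (PI / (2 * p * sqrt p) - 0)
    by (rewrite Ep; field; lra).
  apply (is_RInt_0_oo_antiderivative (RC0_div_primitive p)).
  - intros; apply is_derive_RC0_div_primitive; auto.
  - intros t Ht. unfold RC0_integrand. apply (ex_derive_continuous (V := R_NormedModule)).
    pose proof (sqrt_lt_R0 t Ht). auto_derive. repeat split; nra.
  - apply filterlim_RC0_div_primitive_0, Hp.
  - apply filterlim_RC0_div_primitive_p_infty, Hp.
Qed.

(* Off the diagonal, partial fractions reduce to [is_RInt_RC0_integrand]. *)
Lemma is_RInt_RC0_integrand_div c p : 0 < c -> 0 < p ->
  is_RInt_0_oo (fun t => RC0_integrand c t / (t + p)) (PI / (sqrt c * sqrt p * (sqrt c + sqrt p))).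
Proof.
  intros Hc Hp. destruct (Req_dec c p) as [<-|Hcp]; [apply is_RInt_RC0_integrand_div_same; auto|].
  pose proof (sqrt_lt_R0 p Hp). pose proof (sqrt_sqrt p (Rlt_le _ _ Hp)) as Ep.
  pose proof (sqrt_lt_R0 c Hc). pose proof (sqrt_sqrt c (Rlt_le _ _ Hc)) as Ec.
  assert (Hpc : p - c <> 0) by lra.
  pose proof (is_RInt_gen_scal _ (/ (p - c)) _
    (is_RInt_gen_minus _ _ _ _ (is_RInt_RC0_integrand c Hc) (is_RInt_RC0_integrand p Hp))) as HI.
  replace (PI / (sqrt c * sqrt p * (sqrt c + sqrt p)))
    with (/ (p - c) * (PI / sqrt c - PI / sqrt p)).
  - eapply is_RInt_0_oo_ext; [|exact HI]. intros t Ht.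
    change (/ (p - c) * (RC0_integrand c t - RC0_integrand p t) = RC0_integrand c t / (t + p)).
    unfold RC0_integrand. pose proof (sqrt_lt_R0 t Ht). field. repeat split; lra.
  - assert (Hs : sqrt c <> sqrt p) by (intro E; apply Hcp; rewrite <- Ec, <- Ep, E; ring).
    set (q := sqrt p) in *; set (s := sqrt c) in *. rewrite <- Ep, <- Ec in *.
    field. repeat split; lra.
Qed.

Lemma is_RInt_RC0_integrand_mul_div c p : 0 < c -> 0 < p ->
  is_RInt_0_oo (fun t => RC0_integrand c t * (t / (t + p))) (PI / (sqrt c + sqrt p)).
Proof.
  intros Hc Hp. pose proof (sqrt_lt_R0 p Hp). pose proof (sqrt_sqrt p (Rlt_le _ _ Hp)) as Ep.
  pose proof (sqrt_lt_R0 c Hc).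
  pose proof (is_RInt_gen_minus _ _ _ _ (is_RInt_RC0_integrand c Hc)
    (is_RInt_gen_scal _ p _ (is_RInt_RC0_integrand_div c p Hc Hp))) as HI.
  replace (PI / (sqrt c + sqrt p))
    with (PI / sqrt c - p * (PI / (sqrt c * sqrt p * (sqrt c + sqrt p)))).
  - eapply is_RInt_0_oo_ext; [|exact HI]. intros t Ht.
    change (RC0_integrand c t - p * (RC0_integrand c t / (t + p))
            = RC0_integrand c t * (t / (t + p))).
    field. lra.
  - set (q := sqrt p) in *. rewrite <- Ep. field. lra.
Qed.

(** * Bounds on the integrand of R_F *)

Lemma RF_cubic_pos x y z t :
  0 <= x -> 0 <= y -> 0 <= z -> 0 < t -> 0 < (t + x) * (t + y) * (t + z).
Proof. intros. apply Rmult_lt_0_compat; [apply Rmult_lt_0_compat|]; lra. Qed.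

Lemma RF_integrand_pos x y z t :
  0 <= x -> 0 <= y -> 0 <= z -> 0 < t -> 0 < RF_integrand x y z t.
Proof. intros. apply Rinv_0_lt_compat, sqrt_lt_R0, RF_cubic_pos; auto. Qed.

Lemma continuous_RF_integrand x y z t :
  0 <= x -> 0 <= y -> 0 <= z -> 0 < t -> continuous (RF_integrand x y z) t.
Proof.
  intros Hx Hy Hz Ht. pose proof (RF_cubic_pos x y z t Hx Hy Hz Ht) as HP.
  pose proof (sqrt_lt_R0 _ HP). unfold RF_integrand.
  apply (ex_derive_continuous (V := R_NormedModule)). auto_derive. repeat split; lra.
Qed.

(* Compare coefficients in t: 2 b <= x + y + z, b^2 < x y + x z + y z and x y z >= 0. *)
Lemma cubic_gt_mul_shift_sq x y z b t :
  0 <= x -> 0 <= y -> 0 <= z -> 0 < t -> 0 <= b ->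
  b * b = 3 / 4 * (x * y + x * z + y * z) -> 0 < x * y + x * z + y * z ->
  t * (t + b) ^ 2 < (t + x) * (t + y) * (t + z).
Proof.
  intros Hx Hy Hz Ht Hb Eb He2.
  assert (H2b : 2 * b <= x + y + z).
  { apply Rsqr_incr_0_var; [|lra]. unfold Rsqr.
    pose proof (Rle_0_sqr (x - y)). pose proof (Rle_0_sqr (z - y)). pose proof (Rle_0_sqr (x - z)).
    unfold Rsqr in *. nra. }
  assert (0 <= x * y * z) by (repeat apply Rmult_le_pos; auto).
  assert (0 < t * t) by nra.
  nra.
Qed.

Lemma cubic_le_mean_cube x y z :
  0 <= x -> 0 <= y -> 0 <= z -> 27 * (x * y * z) <= (x + y + z) ^ 3.
Proof.
  intros Hx Hy Hz. assert (Hs : 0 <= x + y + z) by lra.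
  pose proof (Rmult_le_pos _ _ Hs (Rle_0_sqr (x - y))).
  pose proof (Rmult_le_pos _ _ Hs (Rle_0_sqr (y - z))).
  pose proof (Rmult_le_pos _ _ Hs (Rle_0_sqr (x - z))).
  pose proof (Rmult_le_pos _ _ Hx (Rle_0_sqr (y - z))).
  pose proof (Rmult_le_pos _ _ Hy (Rle_0_sqr (x - z))).
  pose proof (Rmult_le_pos _ _ Hz (Rle_0_sqr (x - y))).
  unfold Rsqr in *. nra.
Qed.

Lemma shift_sq_mul_lt_cube_mul_sq t a P :
  0 < a -> a / 2 < t -> 0 <= P -> P <= (t + a) ^ 3 -> (t - a / 2) ^ 2 * P < t ^ 3 * (t + a) ^ 2.
Proof.
  intros Ha Hat HP HPa. assert (0 < (t - a / 2) ^ 2) by nra.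
  apply Rle_lt_trans with ((t - a / 2) ^ 2 * (t + a) ^ 3); [apply Rmult_le_compat_l; lra|].
  assert (0 < (t + a) ^ 2 * a ^ 2 * (3 * t - a)).
  { apply Rmult_lt_0_compat; [apply Rmult_lt_0_compat; apply pow_lt|]; lra. }
  replace (t ^ 3 * (t + a) ^ 2)
    with ((t - a / 2) ^ 2 * (t + a) ^ 3 + (t + a) ^ 2 * a ^ 2 * (3 * t - a) / 4) by field.
  lra.
Qed.

Lemma RF_integrand_lt_RC0_integrand x y z b t :
  0 <= x -> 0 <= y -> 0 <= z -> 0 < t -> 0 < b ->
  b * b = 3 / 4 * (x * y + x * z + y * z) -> 0 < x * y + x * z + y * z ->
  RF_integrand x y z t < RC0_integrand b t.
Proof.
  intros Hx Hy Hz Ht Hb Eb He2. unfold RF_integrand, RC0_integrand.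
  pose proof (sqrt_lt_R0 t Ht). pose proof (sqrt_sqrt t (Rlt_le _ _ Ht)) as Et.
  pose proof (RF_cubic_pos x y z t Hx Hy Hz Ht) as HP.
  pose proof (sqrt_sqrt _ (Rlt_le _ _ HP)) as EP. pose proof (sqrt_lt_R0 _ HP).
  apply Rinv_lt_contravar; [apply Rmult_lt_0_compat; [apply Rmult_lt_0_compat|]; lra|].
  apply Rsqr_incrst_0; [unfold Rsqr|nra|lra].
  rewrite EP.
  replace (sqrt t * (t + b) * (sqrt t * (t + b))) with (sqrt t * sqrt t * (t + b) ^ 2) by ring.
  rewrite Et. apply cubic_gt_mul_shift_sq; auto; lra.
Qed.

Lemma RC0_integrand_shift_lt_RF_integrand x y z t :
  0 <= x -> 0 <= y -> 0 <= z -> 0 < t -> 0 < x + y + z ->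
  (t - (x + y + z) / 3 / 2) * RC0_integrand ((x + y + z) / 3) t < t * RF_integrand x y z t.
Proof.
  intros Hx Hy Hz Ht Hs. set (a := (x + y + z) / 3). assert (Ha : 0 < a) by (unfold a; lra).
  unfold RF_integrand, RC0_integrand.
  pose proof (RF_cubic_pos x y z t Hx Hy Hz Ht) as HP.
  set (P := (t + x) * (t + y) * (t + z)) in *.
  pose proof (sqrt_lt_R0 t Ht). pose proof (sqrt_sqrt t (Rlt_le _ _ Ht)) as Et.
  pose proof (sqrt_lt_R0 _ HP). pose proof (sqrt_sqrt _ (Rlt_le _ _ HP)) as EP.
  set (s := sqrt t) in *. set (q := sqrt P) in *.
  assert (Hcross : (t - a / 2) * q < t * s * (t + a)).
  { assert (0 < t * s * (t + a)) by (apply Rmult_lt_0_compat; [apply Rmult_lt_0_compat|]; lra).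
    destruct (Rle_dec t (a / 2)).
    { assert ((t - a / 2) * q <= 0) by (apply Rmult_le_0_r; lra). lra. }
    apply Rsqr_incrst_0; [unfold Rsqr|nra|lra].
    replace ((t - a / 2) * q * ((t - a / 2) * q)) with ((t - a / 2) ^ 2 * (q * q)) by ring.
    replace (t * s * (t + a) * (t * s * (t + a))) with (t ^ 2 * (s * s) * (t + a) ^ 2) by ring.
    rewrite EP, Et. replace (t ^ 2 * t * (t + a) ^ 2) with (t ^ 3 * (t + a) ^ 2) by ring.
    apply shift_sq_mul_lt_cube_mul_sq; try lra.
    pose proof (cubic_le_mean_cube (t + x) (t + y) (t + z) ltac:(lra) ltac:(lra) ltac:(lra)).
    unfold P, a in *. lra. }
  assert (Hd : 0 < q * (s * (t + a))) by (apply Rmult_lt_0_compat; [|apply Rmult_lt_0_compat]; lra).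
  apply (Rmult_lt_reg_r _ _ _ Hd).
  replace ((t - a / 2) * / (s * (t + a)) * (q * (s * (t + a)))) with ((t - a / 2) * q)
    by (field; lra).
  replace (t * / q * (q * (s * (t + a)))) with (t * s * (t + a)) by (field; lra).
  exact Hcross.
Qed.

(** * The incomplete case *)

Lemma sqrt3_half_sqrt_pos e : 0 < e -> 0 < sqrt 3 / 2 * sqrt e.
Proof.
  intros He. pose proof (sqrt_lt_R0 3 ltac:(lra)). pose proof (sqrt_lt_R0 e He).
  apply Rmult_lt_0_compat; lra.
Qed.

Lemma sqrt3_half_sqrt_sq e : 0 <= e -> sqrt 3 / 2 * sqrt e * (sqrt 3 / 2 * sqrt e) = 3 / 4 * e.
Proof.
  intros He.
  replace (sqrt 3 / 2 * sqrt e * (sqrt 3 / 2 * sqrt e))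
    with (sqrt 3 * sqrt 3 * (sqrt e * sqrt e) / 4) by field.
  rewrite !sqrt_sqrt by lra. field.
Qed.

Section RF_integrals.

Variables x y z : R.
Hypotheses (Hx : 0 <= x) (Hy : 0 <= y) (Hz : 0 <= z).
Hypothesis He2 : 0 < x * y + x * z + y * z.

Let b := sqrt 3 / 2 * sqrt (x * y + x * z + y * z).

Lemma RF_integrand_lt_RC0_integrand_sym2 t : 0 < t -> RF_integrand x y z t < RC0_integrand b t.
Proof.
  intros Ht. apply RF_integrand_lt_RC0_integrand; auto.
  - apply sqrt3_half_sqrt_pos, He2.
  - apply sqrt3_half_sqrt_sq; lra.
Qed.

Lemma ex_RInt_RF_integrand : ex_RInt_0_oo (RF_integrand x y z).
Proof.
  apply (ex_RInt_0_oo_le_RC0_integrand _ b 1); [apply sqrt3_half_sqrt_pos, He2| |].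
  - intros; apply continuous_RF_integrand; auto.
  - intros t Ht. pose proof (RF_integrand_lt_RC0_integrand_sym2 t Ht).
    pose proof (RF_integrand_pos x y z t Hx Hy Hz Ht). lra.
Qed.

Lemma ex_RInt_RJ_integrand p : 0 < p -> ex_RInt_0_oo (fun t => RF_integrand x y z t / (t + p)).
Proof.
  intros Hp.
  apply (ex_RInt_0_oo_le_RC0_integrand _ b (/ p)); [apply sqrt3_half_sqrt_pos, He2| |].
  - intros t Ht. pose proof (RF_cubic_pos x y z t Hx Hy Hz Ht) as HP.
    pose proof (sqrt_lt_R0 _ HP). unfold RF_integrand.
    apply (ex_derive_continuous (V := R_NormedModule)). auto_derive. repeat split; lra.
  - intros t Ht. pose proof (RF_integrand_lt_RC0_integrand_sym2 t Ht).
    pose proof (RF_integrand_pos x y z t Hx Hy Hz Ht).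
    assert (Hinv : / (t + p) <= / p) by (apply Rinv_le_contravar; lra).
    assert (0 < / (t + p)) by (apply Rinv_0_lt_compat; lra).
    unfold Rdiv. split; [nra|]. rewrite Rmult_comm. apply Rmult_le_compat; lra.
Qed.

Lemma is_RInt_RF_integrand_mul_div p : 0 < p ->
  is_RInt_0_oo (fun t => RF_integrand x y z t * (t / (t + p)))
    (2 * RF x y z - 2 / 3 * p * RJ x y z p).
Proof.
  intros Hp.
  pose proof (RInt_0_oo_correct _ ex_RInt_RF_integrand) as HI1.
  pose proof (RInt_0_oo_correct _ (ex_RInt_RJ_integrand p Hp)) as HI2.
  replace (2 * RF x y z - 2 / 3 * p * RJ x y z p)
    with (RInt_0_oo (RF_integrand x y z)
          - p * RInt_0_oo (fun t => RF_integrand x y z t / (t + p))) by (unfold RF, RJ; field).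
  eapply is_RInt_0_oo_ext; [|exact (is_RInt_gen_minus _ _ _ _ HI1 (is_RInt_gen_scal _ p _ HI2))].
  intros t Ht.
  change (RF_integrand x y z t - p * (RF_integrand x y z t / (t + p))
          = RF_integrand x y z t * (t / (t + p))).
  field. lra.
Qed.

Lemma RF_RJ_combination_bounds p : 0 < p ->
  let a := (x + y + z) / 3 in
  PI / (sqrt a + sqrt p) - a / 2 * (PI / (sqrt a * sqrt p * (sqrt a + sqrt p)))
    < 2 * RF x y z - 2 / 3 * p * RJ x y z p < PI / (sqrt b + sqrt p).
Proof.
  intros Hp a. assert (Ha : 0 < a) by (unfold a; nra).
  assert (Hb : 0 < b) by apply sqrt3_half_sqrt_pos, He2.
  assert (Hf : forall t, 0 < t -> continuous (fun t => RF_integrand x y z t * (t / (t + p))) t).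
  { intros t Ht. pose proof (RF_cubic_pos x y z t Hx Hy Hz Ht) as HP.
    pose proof (sqrt_lt_R0 _ HP). unfold RF_integrand.
    apply (ex_derive_continuous (V := R_NormedModule)). auto_derive. repeat split; lra. }
  pose proof (is_RInt_RF_integrand_mul_div p Hp) as HI.
  split.
  - pose proof (is_RInt_gen_minus _ _ _ _ (is_RInt_RC0_integrand_mul_div a p Ha Hp)
      (is_RInt_gen_scal _ (a / 2) _ (is_RInt_RC0_integrand_div a p Ha Hp))) as HA.
    apply (is_RInt_0_oo_lt (fun t => (t - a / 2) * RC0_integrand a t / (t + p))
             (fun t => RF_integrand x y z t * (t / (t + p)))); auto.
    + intros t Ht. pose proof (sqrt_lt_R0 t Ht). unfold RC0_integrand.
      apply (ex_derive_continuous (V := R_NormedModule)). auto_derive. repeat split; nra.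
    + intros t Ht. unfold Rdiv. rewrite <- Rmult_assoc, (Rmult_comm (RF_integrand x y z t)).
      apply Rmult_lt_compat_r; [apply Rinv_0_lt_compat; lra|].
      apply RC0_integrand_shift_lt_RF_integrand; auto. unfold a in Ha. lra.
    + eapply is_RInt_0_oo_ext; [|exact HA]. intros t Ht.
      change (RC0_integrand a t * (t / (t + p)) - a / 2 * (RC0_integrand a t / (t + p))
              = (t - a / 2) * RC0_integrand a t / (t + p)).
      field. lra.
  - apply (is_RInt_0_oo_lt (fun t => RF_integrand x y z t * (t / (t + p)))
             (fun t => RC0_integrand b t * (t / (t + p)))); auto.
    + intros t Ht. pose proof (sqrt_lt_R0 t Ht). unfold RC0_integrand.
      apply (ex_derive_continuous (V := R_NormedModule)). auto_derive. repeat split; nra.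
    + intros t Ht. apply Rmult_lt_compat_r; [apply Rdiv_lt_0_compat; lra|].
      apply RF_integrand_lt_RC0_integrand_sym2, Ht.
    + apply is_RInt_RC0_integrand_mul_div; auto.
Qed.

End RF_integrals.

Lemma Rpower_3_2 p : 0 < p -> Rpower p (3 / 2) = p * sqrt p.
Proof.
  intros Hp. replace (3 / 2) with (1 + / 2) by field.
  rewrite Rpower_plus, Rpower_1, Rpower_sqrt; auto.
Qed.

Lemma RJ_RF_incomplete_estimate x y z p :
  0 <= x -> 0 <= y -> 0 <= z -> 0 < x * y + x * z + y * z -> 0 < p ->
  let a := (x + y + z) / 3 in
  let b := sqrt 3 / 2 * sqrt (x * y + x * z + y * z) in
  exists r : R,
    RJ x y z p = 3 / p * RF x y z + 3 * PI / (2 * Rpower p (3 / 2)) * (-1 + r)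
    /\ sqrt (b / p) / (1 + sqrt (b / p)) < r
    /\ r < 3 / 2 * (sqrt (a / p) / (1 + sqrt (a / p))).
Proof.
  intros Hx Hy Hz He2 Hp a b.
  destruct (RF_RJ_combination_bounds x y z Hx Hy Hz He2 p Hp) as [Hlo Hhi].
  fold a b in Hlo, Hhi.
  set (D := 2 * RF x y z - 2 / 3 * p * RJ x y z p) in *.
  assert (Ha : 0 < a) by (unfold a; nra).
  assert (Hb : 0 < b) by apply sqrt3_half_sqrt_pos, He2.
  pose proof PI_RGT_0. pose proof (sqrt_lt_R0 p Hp). pose proof (sqrt_lt_R0 b Hb).
  pose proof (sqrt_lt_R0 a Ha). pose proof (sqrt_sqrt a (Rlt_le _ _ Ha)) as Ea.
  assert (Hscale : forall u v, u < v -> 1 - sqrt p / PI * v < 1 - sqrt p / PI * u).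
  { intros u v Huv. assert (0 < sqrt p / PI) by (apply Rdiv_lt_0_compat; lra). nra. }
  exists (1 - sqrt p / PI * D). rewrite Rpower_3_2, !sqrt_div_alt by auto. split; [|split].
  - unfold D. field. lra.
  - replace (sqrt b / sqrt p / (1 + sqrt b / sqrt p))
      with (1 - sqrt p / PI * (PI / (sqrt b + sqrt p))) by (field; lra).
    apply Hscale, Hhi.
  - replace (3 / 2 * (sqrt a / sqrt p / (1 + sqrt a / sqrt p)))
      with (1 - sqrt p / PI * (PI / (sqrt a + sqrt p)
                               - a / 2 * (PI / (sqrt a * sqrt p * (sqrt a + sqrt p))))).
    + apply Hscale, Hlo.
    + set (sa := sqrt a) in *. rewrite <- Ea. field. lra.
Qed.

(** * The complete case *)

Lemma sqrt_shift_mul_bounds x y t : 0 < x -> 0 < y -> 0 <= t ->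
  sqrt (x * y) <= sqrt ((t + x) * (t + y)) - t <= (x + y) / 2.
Proof.
  intros Hx Hy Ht. pose proof (sqrt_pos (x * y)). pose proof (sqrt_sqrt (x * y) ltac:(nra)).
  pose proof (sqrt_sqrt ((t + x) * (t + y)) ltac:(nra)).
  pose proof (sqrt_pos ((t + x) * (t + y))).
  assert (Hamgm : 2 * sqrt (x * y) <= x + y).
  { apply Rsqr_incr_0_var; [unfold Rsqr | lra].
    pose proof (Rle_0_sqr (x - y)). unfold Rsqr in *. nra. }
  split.
  - enough (t + sqrt (x * y) <= sqrt ((t + x) * (t + y))) by lra.
    apply Rsqr_incr_0_var; [unfold Rsqr; nra | lra].
  - enough (sqrt ((t + x) * (t + y)) <= t + (x + y) / 2) by lra.
    apply Rsqr_incr_0_var; [unfold Rsqr|lra].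
    pose proof (Rle_0_sqr (x - y)). unfold Rsqr in *. nra.
Qed.

Lemma sqrt_shift_mul_bounds_strict x y t : 0 < x -> 0 < y -> 0 < t -> x <> y ->
  sqrt (x * y) < sqrt ((t + x) * (t + y)) - t < (x + y) / 2.
Proof.
  intros Hx Hy Ht Hxy. pose proof (sqrt_pos (x * y)). pose proof (sqrt_sqrt (x * y) ltac:(nra)).
  pose proof (sqrt_sqrt ((t + x) * (t + y)) ltac:(nra)).
  pose proof (sqrt_pos ((t + x) * (t + y))).
  assert (Hd : 0 < (x - y) * (x - y)) by (apply Rsqr_pos_lt; lra).
  assert (Hamgm : 2 * sqrt (x * y) < x + y).
  { apply Rsqr_incrst_0; [unfold Rsqr | lra | lra]. nra. }
  split.
  - enough (t + sqrt (x * y) < sqrt ((t + x) * (t + y))) by lra.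
    apply Rsqr_incrst_0; [unfold Rsqr; nra | lra | lra].
  - enough (sqrt ((t + x) * (t + y)) < t + (x + y) / 2) by lra.
    apply Rsqr_incrst_0; [unfold Rsqr; nra | lra | lra].
Qed.

Lemma RF_integrand_complete x y t : 0 < x -> 0 < y -> 0 < t ->
  RF_integrand x y 0 t = / (sqrt t * sqrt ((t + x) * (t + y))).
Proof.
  intros Hx Hy Ht. unfold RF_integrand.
  rewrite Rplus_0_r, (Rmult_comm _ t), sqrt_mult; nra.
Qed.

Lemma is_RInt_RJ_complete_mean x y p : 0 < x -> 0 < y -> 0 < p ->
  is_RInt_0_oo (fun t => RF_integrand x y 0 t / (t + p) * (sqrt ((t + x) * (t + y)) - t))
    (PI / sqrt p - 2 * RF x y 0 + 2 / 3 * p * RJ x y 0 p).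
Proof.
  intros Hx Hy Hp.
  assert (He2 : 0 < x * y + x * 0 + y * 0) by nra.
  pose proof (is_RInt_RF_integrand_mul_div x y 0 ltac:(lra) ltac:(lra) ltac:(lra) He2 p Hp) as HI.
  pose proof (is_RInt_gen_minus _ _ _ _ (is_RInt_RC0_integrand p Hp) HI) as HM.
  replace (PI / sqrt p - 2 * RF x y 0 + 2 / 3 * p * RJ x y 0 p)
    with (PI / sqrt p - (2 * RF x y 0 - 2 / 3 * p * RJ x y 0 p)) by ring.
  eapply is_RInt_0_oo_ext; [|exact HM]. intros t Ht.
  change (RC0_integrand p t - RF_integrand x y 0 t * (t / (t + p))
          = RF_integrand x y 0 t / (t + p) * (sqrt ((t + x) * (t + y)) - t)).
  rewrite RF_integrand_complete by auto. unfold RC0_integrand.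
  pose proof (sqrt_lt_R0 t Ht). pose proof (sqrt_lt_R0 ((t + x) * (t + y)) ltac:(nra)).
  field. repeat split; lra.
Qed.

Lemma RJ_complete_mean_bounds x y p : 0 < x -> 0 < y -> 0 < p ->
  let W := 2 / 3 * RJ x y 0 p in
  let M := PI / sqrt p - 2 * RF x y 0 + 2 / 3 * p * RJ x y 0 p in
  0 < W /\ sqrt (x * y) * W <= M <= (x + y) / 2 * W
  /\ (x <> y -> sqrt (x * y) * W < M < (x + y) / 2 * W).
Proof.
  intros Hx Hy Hp W M.
  set (w := fun t => RF_integrand x y 0 t / (t + p)).
  set (h := fun t => sqrt ((t + x) * (t + y)) - t).
  assert (HW : is_RInt_0_oo w W).
  { assert (EW : W = RInt_0_oo w :> R) by (unfold W, RJ; fold w; field).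
    rewrite EW. apply RInt_0_oo_correct, ex_RInt_RJ_integrand; auto; nra. }
  assert (HM : is_RInt_0_oo (fun t => w t * h t) M) by (apply is_RInt_RJ_complete_mean; auto).
  assert (Hw : forall t, 0 < t -> 0 < w t).
  { intros t Ht. apply Rdiv_lt_0_compat; [apply RF_integrand_pos|]; lra. }
  assert (Hwc : forall t, 0 < t -> continuous w t).
  { intros t Ht. unfold w. rewrite <- (Rplus_0_r t) at 1.
    apply (continuous_mult (RF_integrand x y 0) (fun t => / (t + p)));
      [apply continuous_RF_integrand; lra|].
    apply (ex_derive_continuous (V := R_NormedModule)). auto_derive. lra. }
  assert (Hhc : forall t, 0 < t -> continuous h t).
  { intros t Ht. apply (ex_derive_continuous (V := R_NormedModule)). unfold h.
    auto_derive. nra. }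
  split; [|split].
  - exact (is_RInt_0_oo_gt0 w W Hwc Hw HW).
  - apply (is_RInt_0_oo_mean_le w h); auto.
    + intros t Ht. apply Rlt_le, Hw, Ht.
    + intros t Ht. apply sqrt_shift_mul_bounds; lra.
  - intros Hxy. apply (is_RInt_0_oo_mean_lt w h); auto.
    intros t Ht. apply sqrt_shift_mul_bounds_strict; auto.
Qed.

Lemma RJ_complete_estimate x y p : 0 < x -> 0 < y -> 0 < p ->
  RF x y 0 <> PI / (2 * sqrt p) ->
  exists theta : R,
    theta <> p
    /\ RJ x y 0 p = 3 / p * (RF x y 0 - PI / (2 * sqrt p)) * (1 + (theta / p) / (1 - theta / p))
    /\ sqrt (x * y) <= theta /\ theta <= (x + y) / 2
    /\ (theta = sqrt (x * y) <-> x = y)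
    /\ (theta = (x + y) / 2 <-> x = y).
Proof.
  intros Hx Hy Hp HRF. pose proof (sqrt_lt_R0 p Hp).
  destruct (RJ_complete_mean_bounds x y p Hx Hy Hp) as (HW & [Hlo Hhi] & Hstrict).
  set (W := 2 / 3 * RJ x y 0 p) in *.
  set (M := PI / sqrt p - 2 * RF x y 0 + 2 / 3 * p * RJ x y 0 p) in *.
  assert (Hdiag : x = y -> sqrt (x * y) = (x + y) / 2) by (intros <-; rewrite sqrt_square; lra).
  set (theta := M / W).
  assert (Etheta : theta * W = M) by (unfold theta; field; lra).
  assert (Htp : theta <> p).
  { intro E. apply HRF. rewrite E in Etheta. unfold M, W in Etheta.
    replace (PI / (2 * sqrt p)) with (PI / sqrt p / 2) by (field; lra). lra. }
  exists theta. split; [|split; [|split; [|split; [|split]]]].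
  - exact Htp.
  - assert (ERJ : RJ x y 0 p = 3 / 2 * W) by (unfold W; field).
    assert (ERF : RF x y 0 = (PI / sqrt p + (p - theta) * W) / 2)
      by (unfold M, W in Etheta; unfold W; lra).
    rewrite ERJ, ERF. field. repeat split; lra.
  - nra.
  - nra.
  - split; [|intros E; pose proof (Hdiag E); nra].
    intros E. destruct (Req_dec x y) as [|Hxy]; auto. pose proof (Hstrict Hxy). nra.
  - split; [|intros E; pose proof (Hdiag E); nra].
    intros E. destruct (Req_dec x y) as [|Hxy]; auto. pose proof (Hstrict Hxy). nra.
Qed.

Lemma sym2_pos x y z : 0 <= x -> 0 <= y -> 0 <= z ->
  ~ (x = 0 /\ y = 0) -> ~ (x = 0 /\ z = 0) -> ~ (y = 0 /\ z = 0) ->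
  0 < x * y + x * z + y * z.
Proof.
  intros Hx Hy Hz Nxy Nxz Nyz.
  destruct (Rle_lt_or_eq_dec 0 x Hx) as [x0|<-]; destruct (Rle_lt_or_eq_dec 0 y Hy) as [y0|<-];
    destruct (Rle_lt_or_eq_dec 0 z Hz) as [z0|<-]; try tauto; nra.
Qed.

Theorem mainTheorem10 :
  forall x y z p : R,
    0 <= x -> 0 <= y -> 0 <= z ->
    ~ (x = 0 /\ y = 0) -> ~ (x = 0 /\ z = 0) -> ~ (y = 0 /\ z = 0) ->
    0 < p ->
    (let a := (x + y + z) / 3 in
     let b := sqrt 3 / 2 * sqrt (x * y + x * z + y * z) in
     exists r : R,
       RJ x y z p = 3 / p * RF x y z + 3 * PI / (2 * Rpower p (3 / 2)) * (-1 + r)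
       /\ sqrt (b / p) / (1 + sqrt (b / p)) < r
       /\ r < 3 / 2 * (sqrt (a / p) / (1 + sqrt (a / p))))
    /\
    (z = 0 -> 0 < x -> 0 < y ->
     RF x y 0 <> PI / (2 * sqrt p) ->
     exists theta : R,
       theta <> p
       /\ RJ x y 0 p
          = 3 / p * (RF x y 0 - PI / (2 * sqrt p)) * (1 + (theta / p) / (1 - theta / p))
       /\ sqrt (x * y) <= theta /\ theta <= (x + y) / 2
       /\ (theta = sqrt (x * y) <-> x = y)
       /\ (theta = (x + y) / 2 <-> x = y)).
Proof.
  intros x y z p Hx Hy Hz Nxy Nxz Nyz Hp.
  split.
  - apply RJ_RF_incomplete_estimate; auto. apply sym2_pos; auto.
  - intros -> Hx0 Hy0 HRF. apply RJ_complete_estimate; auto.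
Qed.
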